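(* Let $p$ be a prime, let $m,n$ be positive integers, let $V_m$ and $V_n$ be $\mathbb{F}_p$-vector spaces of dimensions $m$ and $n$, each equipped with a nondegenerate inner product $\langle\cdot,\cdot\rangle$. Let $f:V_m\to\mathbb{F}_p$ and $g:V_n\to\mathbb{F}_p$ be bent functions and let $h:V_m\to V_n$ be any function. Define $F:V_m\times V_n\to\mathbb{F}_p$ by \[F(x,y)=f(x)+g(y+h(x)).\] Then $F$ is bent if and only if for every $b\in V_n$ the function $G_b:V_m\to\mathbb{F}_p$, $G_b(x)=f(x)+\langle b,h(x)\rangle$, is bent. In that case the dual of $F$ is \[F^*(x,y)=G_y^*(x)+g^*(y),\] where $G_y^*$ and $g^*$ denote the duals of $G_y$ and $g$.
   Context: For $f:V_n\to\mathbb{F}_p$, the Walsh transform is $\widehat f(b)=\sum_{x\in V_n}\epsilon_p^{f(x)-\langle b,x\rangle}$ with $\epsilon_p=e^{2\pi i/p}$; on $V_m\times V_n$ the inner product is $\langle (a,b),(x,y)\rangle=\langle a,x\rangle+\langle b,y\rangle$. $f$ is bent if $|\widehat f(b)|=p^{n/2}$ for all $b$. For a bent $f$ there is a unique function $f^*:V_n\to\mathbb{F}_p$ (the dual) with $\widehat f(b)=\zeta_b\,p^{n/2}\epsilon_p^{f^*(b)}$ for some $\zeta_b\in\{\pm1,\pm i\}$ (for $p=2$: $\widehat f(b)=(-1)^{f^*(b)}2^{n/2}$; for odd $p$: $\zeta_b\in\{\pm1\}$ if $p^n\equiv1\pmod 4$ and $\zeta_b\in\{\pm i\}$ if $p^n\equiv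 3\pmod 4$). *)

From HB Require Import structures.
From mathcomp Require Import all_boot all_order all_algebra.
From mathcomp Require Import reals trigo.
From mathcomp.real_closed Require Import complex.
Import GRing.Theory Num.Theory.
Local Open Scope ring_scope.

Definition eps (R : realType) (p : nat) : R[i] :=
  (cos (2 * pi / p%:R) +i* sin (2 * pi / p%:R))%C.

(* Every nondegenerate symmetric bilinear form on an
   n-dimensional F_p-space is of this form for some symmetric invertible B. *)
Definition ipB (p n : nat) (B : 'M['F_p]_n) (x y : 'rV['F_p]_n) : 'F_p :=
  (x *m B *m y^T) 0 0.

Definition nondeg_ip (p n : nat) (B : 'M['F_p]_n) : Prop :=
  B^T = B /\ B \in unitmx.

Definition ip_prod (p m n : nat) (Bm : 'M['F_p]_m) (Bn : 'M['F_p]_n)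
    (u v : 'rV['F_p]_m * 'rV['F_p]_n) : 'F_p :=
  ipB p m Bm u.1 v.1 + ipB p n Bn u.2 v.2.

Definition walsh (R : realType) (p : nat) (T : finType) (ip : T -> T -> 'F_p)
    (f : T -> 'F_p) (b : T) : R[i] :=
  \sum_(x : T) eps R p ^+ (nat_of_ord (f x - ip b x)).

Definition bent (R : realType) (p n : nat) (T : finType) (ip : T -> T -> 'F_p)
    (f : T -> 'F_p) : Prop :=
  forall b : T, `|walsh R p T ip f b| = sqrtC ((p ^ n)%N%:R : R[i]).

Definition zeta_ok (R : realType) (p n : nat) (z : R[i]) : Prop :=
  if p == 2%N then z = 1
  else if (p ^ n %% 4 == 1)%N then z = 1 \/ z = -1
  else z = 'i \/ z = - 'i.

(* fs is the dual f^* of f : \hat f(b) = zeta_b p^{n/2} eps_p^{fs(b)} for all b.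
   (For bent f such fs exists and is unique.) *)
Definition is_dual (R : realType) (p n : nat) (T : finType) (ip : T -> T -> 'F_p)
    (f : T -> 'F_p) (fs : T -> 'F_p) : Prop :=
  forall b : T, exists z : R[i], zeta_ok R p n z /\
    walsh R p T ip f b = z * sqrtC ((p ^ n)%N%:R : R[i]) * eps R p ^+ (nat_of_ord (fs b)).

From HB Require Import structures.
From mathcomp Require Import all_boot all_order all_algebra.
From mathcomp Require Import reals trigo.
From mathcomp.real_closed Require Import complex.
From mathcomp Require Import ring.
Import GRing.Theory Num.Theory.
Local Open Scope ring_scope.

(** Substituting [y := y + h x] in the inner sum splits the Walsh transform of
    [F(x,y) = f x + g (y + h x)] at [(a,b)] into [\hat G_b(a) * \hat g(b)], with
    [G_b = f + <b, h>].  Taking absolute values gives the bentness criterion,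
    and multiplying the dual representations of the two factors gives [F^*];
    the sign factors multiply correctly because [p^(m+n) = 1 mod 4] iff
    [p^m] and [p^n] agree mod 4. *)

Lemma eps_exp (R : realType) (p k : nat) :
  eps R p ^+ k = (cos ((2 * pi / p%:R) *+ k) +i* sin ((2 * pi / p%:R) *+ k))%C.
Proof.
elim: k => [|k IH]; first by rewrite !mulr0n cos0 sin0.
set t := 2 * pi / p%:R in IH *.
rewrite exprS IH [t *+ k.+1]mulrS cosD sinD /eps -/t.
by rewrite [sin t * cos _ + _]addrC.
Qed.

Lemma eps_expp (R : realType) (p : nat) : (0 < p)%N -> eps R p ^+ p = 1.
Proof.
move=> p_gt0; rewrite eps_exp -mulr_natr divfK; last by rewrite pnatr_eq0 -lt0n.
by rewrite mulr_natl cos2pi sin2pi.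
Qed.

Lemma eps_expD (R : realType) (p : nat) (u v : 'F_p) : prime p ->
  eps R p ^+ nat_of_ord (u + v) = eps R p ^+ nat_of_ord u * eps R p ^+ nat_of_ord v.
Proof.
move=> p_pr.
have -> : nat_of_ord (u + v) = ((nat_of_ord u + nat_of_ord v) %% p)%N.
  by rewrite -val_Fp_nat // natrD !natr_Zp.
by rewrite expr_mod ?exprD // eps_expp // prime_gt0.
Qed.

Lemma ipBDr (p n : nat) (B : 'M['F_p]_n) (b y z : 'rV['F_p]_n) :
  ipB p n B b (y + z) = ipB p n B b y + ipB p n B b z.
Proof. by rewrite /ipB linearD /= mulmxDr mxE. Qed.

Lemma sqrtC_natM (R : realType) (a b : nat) :
  sqrtC ((a * b)%N%:R : R[i]) = sqrtC (a%:R : R[i]) * sqrtC (b%:R : R[i]).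
Proof. by rewrite natrM sqrtCM // qualifE /= ler0n. Qed.

Lemma expnD_mod4_eq1 (p m n : nat) : odd p ->
  (p ^ (m + n) %% 4 == 1)%N = ((p ^ m %% 4 == 1) == (p ^ n %% 4 == 1))%N.
Proof.
move=> p_odd.
have odd_mod4 k : odd (p ^ k %% 4) by rewrite odd_mod // oddX p_odd orbT.
have lt_mod4 k : (p ^ k %% 4 < 4)%N by rewrite ltn_mod.
rewrite expnD -modnMm.
move: (odd_mod4 m) (odd_mod4 n) (lt_mod4 m) (lt_mod4 n).
by case: (p ^ m %% 4)%N => [|[|[|[|?]]]] //; case: (p ^ n %% 4)%N => [|[|[|[|?]]]].
Qed.

Lemma zeta_okM (R : realType) (p m n : nat) (z1 z2 : R[i]) : prime p ->
  zeta_ok R p m z1 -> zeta_ok R p n z2 -> zeta_ok R p (m + n) (z1 * z2).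
Proof.
move=> p_pr; rewrite /zeta_ok; case: eqP => [_ -> ->|p_neq2]; first by rewrite mulr1.
have p_odd : odd p by case: (even_prime p_pr).
rewrite expnD_mod4_eq1 //.
case: (p ^ m %% 4 == 1)%N; case: (p ^ n %% 4 == 1)%N => /= [] [->|->] [->|->];
  rewrite ?(mulr1, mul1r, mulrN, mulNr, opprK) -?expr2 ?sqrCi ?opprK;
  by [left | right].
Qed.

Section ShiftedSum.

Variables (R : realType) (p m n : nat).
Hypothesis p_pr : prime p.
Variables (Bm : 'M['F_p]_m) (Bn : 'M['F_p]_n).
Variables (f : 'rV['F_p]_m -> 'F_p) (g : 'rV['F_p]_n -> 'F_p).
Variable h : 'rV['F_p]_m -> 'rV['F_p]_n.

Let F (u : 'rV['F_p]_m * 'rV['F_p]_n) := f u.1 + g (u.2 + h u.1).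
Let G (b : 'rV['F_p]_n) (x : 'rV['F_p]_m) := f x + ipB p n Bn b (h x).

Lemma walsh_shifted_sum a b :
  walsh R p _ (ip_prod p m n Bm Bn) F (a, b) =
  walsh R p _ (ipB p m Bm) (G b) a * walsh R p _ (ipB p n Bn) g b.
Proof.
pose term x y := eps R p ^+ nat_of_ord (F (x, y) - ip_prod p m n Bm Bn (a, b) (x, y)).
rewrite /walsh (eq_bigr (fun u => term u.1 u.2)); last by case.
rewrite -(pair_bigA _ term) big_distrl; apply: eq_bigr => x _.
rewrite big_distrr [RHS](reindex_inj (addIr (h x))); apply: eq_bigr => y _.
apply: etrans _ (eps_expD _ _ _ _ p_pr); congr (_ ^+ nat_of_ord _).
rewrite /F /G /ip_prod /= ipBDr; ring.
Qed.

Lemma bent_shifted_sumP : bent R p n _ (ipB p n Bn) g ->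
  bent R p (m + n) _ (ip_prod p m n Bm Bn) F <->
  forall b, bent R p m _ (ipB p m Bm) (G b).
Proof.
move=> g_bent; have sqrt_pn_neq0 : sqrtC ((p ^ n)%N%:R : R[i]) != 0.
  by rewrite sqrtC_eq0 pnatr_eq0 -lt0n expn_gt0 prime_gt0.
split=> [F_bent b a | G_bent [a b]]; last first.
  by rewrite walsh_shifted_sum normrM G_bent g_bent expnD sqrtC_natM.
apply: (mulIf sqrt_pn_neq0); rewrite -{1}(g_bent b) -normrM -walsh_shifted_sum.
by rewrite F_bent expnD sqrtC_natM.
Qed.

Lemma is_dual_shifted_sum (Gs : 'rV['F_p]_n -> 'rV['F_p]_m -> 'F_p)
    (gs : 'rV['F_p]_n -> 'F_p) :
  (forall b, is_dual R p m _ (ipB p m Bm) (G b) (Gs b)) ->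
  is_dual R p n _ (ipB p n Bn) g gs ->
  is_dual R p (m + n) _ (ip_prod p m n Bm Bn) F (fun u => Gs u.2 u.1 + gs u.2).
Proof.
move=> G_dual g_dual [a b].
have [z1 [z1_ok walshG]] := G_dual b a; have [z2 [z2_ok walshg]] := g_dual b.
exists (z1 * z2); split; first exact: zeta_okM.
rewrite walsh_shifted_sum walshG walshg eps_expD // expnD sqrtC_natM; ring.
Qed.

End ShiftedSum.

Theorem theorem1 (R : realType) (p m n : nat) (hp : prime p)
    (hm : (0 < m)%N) (hn : (0 < n)%N)
    (Bm : 'M['F_p]_m) (Bn : 'M['F_p]_n)
    (hBm : nondeg_ip p m Bm) (hBn : nondeg_ip p n Bn)
    (f : 'rV['F_p]_m -> 'F_p) (g : 'rV['F_p]_n -> 'F_p)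
    (h : 'rV['F_p]_m -> 'rV['F_p]_n)
    (hf : bent R p m _ (ipB p m Bm) f) (hg : bent R p n _ (ipB p n Bn) g) :
  let F := fun u : 'rV['F_p]_m * 'rV['F_p]_n => f u.1 + g (u.2 + h u.1) in
  let G := fun (b : 'rV['F_p]_n) (x : 'rV['F_p]_m) => f x + ipB p n Bn b (h x) in
  (bent R p (m + n) _ (ip_prod p m n Bm Bn) F <-> forall b, bent R p m _ (ipB p m Bm) (G b)) /\
  (bent R p (m + n) _ (ip_prod p m n Bm Bn) F ->
   forall (Gs : 'rV['F_p]_n -> 'rV['F_p]_m -> 'F_p) (gs : 'rV['F_p]_n -> 'F_p),
     (forall b, is_dual R p m _ (ipB p m Bm) (G b) (Gs b)) ->
     is_dual R p n _ (ipB p n Bn) g gs ->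
     is_dual R p (m + n) _ (ip_prod p m n Bm Bn) F (fun u => Gs u.2 u.1 + gs u.2)).
Proof.
move=> F G; split; first exact: bent_shifted_sumP.
by move=> _; apply: is_dual_shifted_sum.
Qed.
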